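(* Let $\mathcal{C}$ be an $(n,k,d)$ linear MDS code over a finite field $\mathbb{F}_q$ with $d \ge 2$. Then $$\frac{1}{d-1}\binom{n}{d-2} \le \rho(\mathcal{C}) \le \binom{n}{d-2}.$$
   Context: An $(n,k,d)$ linear MDS code is a linear code over $\mathbb{F}_q$ of length $n$, dimension $k$ and minimum Hamming distance $d = n-k+1$. A parity-check matrix for $\mathcal{C}$ is any matrix (possibly with linearly dependent rows) whose rows span $\mathcal{C}^\perp$. For a parity-check matrix $H$, the stopping distance $s(H)$ is the largest integer such that for every set of $s(H)-1$ or fewer columns of $H$, the projection of $H$ onto those columns contains at least one row with exactly one nonzero entry. The stopping redundancy $\rho(\mathcal{C})$ is the smallest number of rows of a parity-check matrix $H$ for $\mathcal{C}$ with $s(H) = d$. *)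

From HB Require Import structures.
From mathcomp Require Import all_boot all_order all_algebra all_field.
Set Implicit Arguments. Unset Strict Implicit. Unset Printing Implicit Defensive.
Import GRing.Theory.
Local Open Scope ring_scope.

(* A linear code of length n over F is the row space of a matrix
   C : 'M[F]_(m, n) (any number m of generating rows). *)

Definition wt (F : fieldType) (n : nat) (v : 'rV[F]_n) : nat :=
  #|[set j : 'I_n | v 0 j != 0]|.

Definition codeword (F : fieldType) (m n : nat) (C : 'M[F]_(m, n)) (v : 'rV[F]_n) :=
  (v <= C)%MS.

Definition min_dist (F : fieldType) (m n : nat) (C : 'M[F]_(m, n)) (d : nat) : Prop :=
  (exists2 v : 'rV[F]_n, codeword C v /\ v != 0 & wt v = d) /\
  (forall v : 'rV[F]_n, codeword C v -> v != 0 -> (d <= wt v)%N).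

Definition MDS_code (F : fieldType) (m n : nat) (C : 'M[F]_(m, n)) (k d : nat) : Prop :=
  \rank C = k /\ min_dist C d /\ d = (n - k + 1)%N.

Definition parity_check (F : fieldType) (m n r : nat)
    (C : 'M[F]_(m, n)) (H : 'M[F]_(r, n)) : Prop :=
  forall u : 'rV[F]_n, (u <= H)%MS = (u *m C^T == 0).

Definition has_single_row (F : fieldType) (r n : nat) (H : 'M[F]_(r, n))
    (S : {set 'I_n}) : Prop :=
  exists i : 'I_r, #|[set j in S | H i j != 0]| = 1%N.

Definition cols_ok (F : fieldType) (r n : nat) (H : 'M[F]_(r, n)) (t : nat) : Prop :=
  forall S : {set 'I_n}, (0 < #|S|)%N -> (#|S| <= t)%N -> has_single_row H S.

(* s(H) = s : s is the largest integer such that every set of s-1 or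
   fewer (nonempty) columns has the property. *)
Definition stopping_distance_is (F : fieldType) (r n : nat) (H : 'M[F]_(r, n))
    (s : nat) : Prop :=
  cols_ok H s.-1 /\ ~ cols_ok H s.

From HB Require Import structures.
From mathcomp Require Import all_boot all_order all_algebra all_field.
From mathcomp Require Import zify.
Set Implicit Arguments. Unset Strict Implicit. Unset Printing Implicit Defensive.
Import GRing.Theory.

(* Write k for the dimension, so d - 1 = n - k.  No nonzero word of the dual
   code has weight <= k (its restriction to a k-set containing its support
   would be orthogonal to the whole restricted code, which has full rank
   because no codeword vanishes on k coordinates), and a dimension count gives
   a dual word supported on any prescribed (k+1)-set T.  These words span the
   dual (subtract a multiple of one to kill a coordinate and induct on the
   weight), so one of them for each T is a parity-check matrix with
   'C(n, k+1) = 'C(n, d-2) rows; a set S of at most n - k columns meets the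
   row of T = {j} u B, with j in S and B a k-set avoiding S, exactly in j.
   No parity-check matrix does this for the support of a weight-d codeword.
   Conversely, if every (n-k)-set S has a row meeting it in a single column j,
   the zeros of that row, at most n-k-1 of them, contain S minus j: hence the
   row has weight k+1 and S = {j} u zeros.  So the (n-k)-sets are indexed by
   at most r (k+1) pairs (row, j), and (n-k) 'C(n, n-k) = (k+1) 'C(n, d-2). *)

Lemma exists_set_card_between (T : finType) (A B : {set T}) m :
  A \subset B -> (#|A| <= m <= #|B|)%N ->
  exists D : {set T}, [/\ A \subset D, D \subset B & #|D| = m].
Proof.
move=> sAB; elim: m => [|m IH] /andP[leA leB].
  by exists A; split=> //; apply/eqP; rewrite -leqn0.
case: (ltngtP #|A| m.+1) leA => // [ltA _ | eA _]; last by exists A.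
have [D [sAD sDB cD]] := IH (introT andP (conj ltA (ltnW leB))).
have /properP[_ [x xB xD]] : D \proper B by rewrite properEcard sDB cD.
exists (x |: D); split; first exact: subset_trans sAD (subsetUr _ _).
  by rewrite subUset sub1set xB.
by rewrite cardsU1 xD cD.
Qed.

Lemma card_bigcup_leq (I T : finType) (P : {pred I}) (F : I -> {set T}) :
  (#|\bigcup_(i | P i) F i| <= \sum_(i | P i) #|F i|)%N.
Proof.
elim/big_rec2: _ => [|i n A _ IH]; first by rewrite cards0.
by rewrite (leq_trans (leq_card_setU _ _)) ?leq_add2l.
Qed.

Section Support.
Local Open Scope ring_scope.
Variables (F : fieldType) (n : nat).

Definition supp (v : 'rV[F]_n) : {set 'I_n} := [set j | v 0 j != 0].

Lemma wtE (v : 'rV[F]_n) : wt v = #|supp v|. Proof. by []. Qed.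

Lemma supp_eq0 (v : 'rV[F]_n) : (supp v == set0) = (v == 0).
Proof.
apply/eqP/eqP => [/setP s0 | ->]; last by apply/setP => j; rewrite !inE mxE eqxx.
by apply/rowP => j; have := s0 j; rewrite !inE mxE => /negbFE/eqP.
Qed.

Lemma supp_row m (A : 'M[F]_(m, n)) i j : (j \in supp (row i A)) = (A i j != 0).
Proof. by rewrite inE mxE. Qed.

Definition sel_mx (T : {set 'I_n}) : 'M[F]_(#|T|, n) :=
  \matrix_(t, j) (j == enum_val t)%:R.

Lemma mul_sel_mxTE (T : {set 'I_n}) (v : 'rV[F]_n) t :
  (v *m (sel_mx T)^T) 0 t = v 0 (enum_val t).
Proof.
rewrite !mxE (bigD1 (enum_val t)) //= big1 => [|j /negbTE nj].
  by rewrite !mxE eqxx mulr1 addr0.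
by rewrite !mxE nj mulr0.
Qed.

Lemma supp_mul_sel_mx (T : {set 'I_n}) (x : 'rV[F]_#|T|) :
  supp (x *m sel_mx T) \subset T.
Proof.
apply/subsetP => j; rewrite inE; apply: contraR => jT.
rewrite mxE big1 // => t _; rewrite mxE.
by case: eqP => [e | _]; [move: jT; rewrite e enum_valP | rewrite mulr0].
Qed.

Lemma sel_mx_mulT (T : {set 'I_n}) : sel_mx T *m (sel_mx T)^T = 1%:M.
Proof.
apply/row_matrixP => s; apply/rowP => t.
by rewrite row_mul mul_sel_mxTE !mxE (inj_eq enum_val_inj) eq_sym.
Qed.

Lemma sel_mxK (T : {set 'I_n}) (v : 'rV[F]_n) :
  supp v \subset T -> v *m (sel_mx T)^T *m sel_mx T = v.
Proof.
move=> sT; apply/rowP => j; rewrite mxE.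
have [jT | jT] := boolP (j \in T).
  rewrite (bigD1 (enum_rank_in jT j)) //= big1 => [|t nt].
    by rewrite mul_sel_mxTE !mxE enum_rankK_in // eqxx mulr1 addr0.
  rewrite !mxE; case: eqP => [e | _]; last by rewrite mulr0.
  by case/eqP: nt; rewrite -{1}(enum_valK_in jT t) -e.
have -> : v 0 j = 0 by apply/eqP; apply: contraR jT => vj; apply: (subsetP sT); rewrite inE.
rewrite big1 // => t _; rewrite !mxE.
by case: eqP => [e | _]; [move: jT; rewrite e enum_valP | rewrite mulr0].
Qed.

Lemma submx_by_supp_descent p r (V : 'M[F]_(p, n)) (H : 'M[F]_(r, n)) :
  (H <= V)%MS ->
  (forall u : 'rV_n, (u <= V)%MS -> u != 0 ->
     exists2 h, (h <= H)%MS & h != 0 /\ supp h \subset supp u) ->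
  (V <= H)%MS.
Proof.
move=> sHV descent.
suff sub_wt w (u : 'rV_n) : (wt u < w)%N -> (u <= V)%MS -> (u <= H)%MS.
  by apply/row_subP => i; apply: (sub_wt (wt (row i V)).+1) => //; exact: row_sub.
elim: w u => // w IH u hw uV.
have [-> | unz] := eqVneq u 0; first exact: sub0mx.
have [h hH [hnz shu]] := descent u uV unz.
have [j jh] : exists j, j \in supp h by apply/set0Pn; rewrite supp_eq0.
have hj : h 0 j != 0 by rewrite inE in jh.
set v := u - (u 0 j / h 0 j) *: h.
have svu : supp v \subset supp u :\ j.
  apply/subsetP => j'; rewrite !inE !mxE; apply: contraR.
  rewrite negb_and !negbK => /orP[/eqP -> | uj']; first by rewrite divfK ?subrr.
  have -> : h 0 j' = 0.
    apply/eqP; apply: contraTT uj' => hj'.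
    by have := subsetP shu j'; rewrite !inE; apply.
  by rewrite (eqP uj') mulr0 subrr.
have vV : (v <= V)%MS.
  by rewrite addmx_sub // eqmx_opp scalemx_sub // (submx_trans hH sHV).
have wv : (wt v < w)%N.
  have := subset_leq_card svu; have := cardsD1 j (supp u).
  rewrite (subsetP shu j jh) -!wtE; lia.
rewrite -(subrK ((u 0 j / h 0 j) *: h) u) -/v.
by rewrite addmx_sub ?scalemx_sub ?(IH v).
Qed.

End Support.

Section StoppingSets.
Local Open Scope ring_scope.
Variables (F : fieldType) (r n : nat) (H : 'M[F]_(r, n)).

Lemma has_single_rowP (S : {set 'I_n}) :
  has_single_row H S <-> exists i j, S :&: supp (row i H) = [set j].
Proof.
have eS i : [set j in S | H i j != 0] = S :&: supp (row i H).
  by apply/setP => j; rewrite !inE mxE.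
split => [[i] | [i [j e]]]; last by exists i; rewrite eS e cards1.
by rewrite eS => /eqP/cards1P[j e]; exists i, j.
Qed.

Lemma not_single_row_supp (v : 'rV[F]_n) :
  H *m v^T = 0 -> ~ has_single_row H (supp v).
Proof.
move=> Hv /has_single_rowP[i [j e]].
have inS j' : (j' \in supp v) && (H i j' != 0) = (j' == j).
  by rewrite -supp_row -in_setI e inE.
have /andP[vj hj] : (j \in supp v) && (H i j != 0) by rewrite inS.
rewrite inE in vj.
have : (H *m v^T) i 0 = H i j * v 0 j.
  rewrite mxE (bigD1 j) //= big1 ?mxE ?addr0 // => j' nj'; rewrite mxE.
  move: (inS j'); rewrite (negbTE nj') inE => /negbT; rewrite negb_and !negbK.
  by case/orP => /eqP ->; rewrite ?mulr0 ?mul0r.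
by rewrite Hv mxE => /esym/eqP; rewrite mulf_eq0 (negbTE vj) (negbTE hj).
Qed.

Definition realizes_supports (s : nat) :=
  forall T : {set 'I_n}, #|T| = s -> exists i, supp (row i H) = T.

Lemma cols_ok_realizes k : realizes_supports k.+1 -> cols_ok H (n - k).
Proof.
move=> realH S S0 Sk.
have [j jS] : exists j, j \in S by apply/set0Pn; rewrite -card_gt0.
have [T [jT sT cT]] : exists T : {set 'I_n},
    [/\ [set j] \subset T, T \subset j |: ~: S & #|T| = k.+1].
  apply: exists_set_card_between; first by rewrite sub1set setU11.
  rewrite cards1 cardsU1 !inE jS /= cardsCs setCK card_ord; lia.
have [i si] := realH T cT; apply/has_single_rowP; exists i, j.
rewrite si; apply/setP => j'; rewrite !inE.
apply/andP/eqP => [[j'S /(subsetP sT)] | ->]; last by rewrite jS -sub1set.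
by rewrite !inE j'S orbF => /eqP.
Qed.

Section RowWeights.
Variable k : nat.
Hypothesis row_wt : forall i, row i H != 0 -> (k < wt (row i H))%N.

Lemma single_row_set (S : {set 'I_n}) i j :
  #|S| = (n - k)%N -> S :&: supp (row i H) = [set j] ->
  [/\ j \in supp (row i H), wt (row i H) = k.+1 & S = j |: ~: supp (row i H)].
Proof.
move=> cS e.
have /setIP[jS jsupp] : j \in S :&: supp (row i H) by rewrite e set11.
have /row_wt wi : row i H != 0 by rewrite -supp_eq0; apply/set0Pn; exists j.
have sZ : S :\ j \subset ~: supp (row i H).
  apply/subsetP => j'; rewrite in_setD1 in_setC => /andP[nj j'S].
  by apply: contra nj => j'supp; rewrite -in_set1 -e in_setI j'S.
have cSj : #|S :\ j|.+1 = (n - k)%N by rewrite -cS (cardsD1 j S) jS.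
have cZ : #|~: supp (row i H)| = (n - wt (row i H))%N by rewrite cardsCs setCK card_ord.
have wn : (wt (row i H) <= n)%N by rewrite wtE -[X in (_ <= X)%N](card_ord n) max_card.
have eZ : S :\ j = ~: supp (row i H).
  have leZ : (#|~: supp (row i H)| <= #|S :\ j|)%N by rewrite cZ; lia.
  by apply/eqP; rewrite eqEcard sZ /=; exact: leZ.
split=> //; last by rewrite -eZ setD1K.
by move: cZ; rewrite -eZ; lia.
Qed.

Lemma card_stopping_sets :
  (k < n)%N -> cols_ok H (n - k) -> ('C(n, n - k) <= r * k.+1)%N.
Proof.
move=> kn ok; rewrite -[n in 'C(n, _)]card_ord -card_draws.
pose cover i := [set j |: ~: supp (row i H) | j in supp (row i H)].
apply: (@leq_trans #|\bigcup_(i | wt (row i H) == k.+1) cover i|).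
  apply/subset_leq_card/subsetP => S; rewrite inE => /eqP cS.
  have /has_single_rowP[i [j e]] : has_single_row H S by apply: ok; rewrite cS; lia.
  have [jsupp wi ->] := single_row_set cS e.
  by apply/bigcupP; exists i; [rewrite wi | exact: imset_f].
apply: leq_trans (card_bigcup_leq _ _) _.
apply: (@leq_trans (\sum_(i | wt (row i H) == k.+1) k.+1)).
  by apply: leq_sum => i /eqP wi; rewrite -wi wtE leq_imset_card.
by rewrite sum_nat_cond_const leq_mul2r -[X in (_ <= X)%N](card_ord r) max_card orbT.
Qed.

Lemma card_stopping_sets_bin :
  (k < n)%N -> cols_ok H (n - k) -> ('C(n, n - k.+1) <= (n - k) * r)%N.
Proof.
move=> kn ok; have := card_stopping_sets kn ok.
have := mul_bin_left n (n - k.+1).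
rewrite -subSn // subSS subKn ?(ltnW kn) // => bin le.
rewrite -(leq_pmul2l (ltn0Sn k)) -bin mulnCA (mulnC k.+1).
by rewrite leq_mul2l le orbT.
Qed.

End RowWeights.

End StoppingSets.

Lemma parity_check_mul0 (F : fieldType) (m n r : nat) (C : 'M[F]_(m, n))
    (H : 'M[F]_(r, n)) :
  parity_check C H -> (H *m C^T = 0)%R.
Proof.
move=> pH; apply/row_matrixP => i.
by rewrite row_mul row0; apply/eqP; rewrite -pH row_sub.
Qed.

Section MDSDual.
Local Open Scope ring_scope.
Variables (F : fieldType) (m n k : nat) (C : 'M[F]_(m, n)).
Hypothesis rankC : \rank C = k.
Hypothesis C_mds : forall v : 'rV[F]_n, (v <= C)%MS -> v != 0 -> (n - k < wt v)%N.

Lemma info_set_rank (T : {set 'I_n}) :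
  #|T| = k -> \rank (C *m (sel_mx F T)^T) = k.
Proof.
move=> cT; suff /eqP K0 : (C :&: kermx (sel_mx F T)^T)%MS == 0.
  by have := mxrank_mul_ker C (sel_mx F T)^T; rewrite K0 mxrank0 addn0 rankC.
apply/rowV0P => v; rewrite sub_capmx sub_kermx => /andP[vC /eqP vT].
apply/eqP/negPn/negP => /(C_mds vC); apply/negP; rewrite -leqNgt wtE.
have : supp v \subset ~: T.
  apply/subsetP => j; rewrite !inE; apply: contraNN => jT.
  by rewrite -(enum_rankK_in jT jT) -mul_sel_mxTE vT mxE.
by move/subset_leq_card; rewrite [#|~: T|]cardsCs setCK card_ord cT.
Qed.

Lemma dual_wt_gt (h : 'rV[F]_n) : h *m C^T = 0 -> h != 0 -> (k < wt h)%N.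
Proof.
move=> hC; apply: contraTT; rewrite -leqNgt negbK => hk.
have kn : (k <= n)%N by rewrite -rankC rank_leq_col.
have [T [hT _ cT]] : exists T : {set 'I_n}, [/\ supp h \subset T, T \subset setT & #|T| = k].
  by apply: exists_set_card_between; rewrite ?subsetT // cardsT card_ord -wtE hk.
set S := sel_mx F T.
have rf : row_free (C *m S^T)^T by rewrite /row_free mxrank_tr (info_set_rank cT) cT.
have hS0 : h *m S^T = 0.
  by apply: (row_free_inj rf); rewrite mul0mx trmx_mul trmxK mulmxA sel_mxK.
by rewrite -(sel_mxK hT) hS0 mul0mx.
Qed.

Lemma dual_codeword_with_supp (T : {set 'I_n}) :
  #|T| = k.+1 -> exists2 h : 'rV[F]_n, h *m C^T = 0 & supp h = T.
Proof.
move=> cT; set S := sel_mx F T.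
have : kermx (S *m C^T) != 0.
  rewrite -mxrank_eq0 mxrank_ker; have := mxrankM_maxr S C^T.
  by rewrite mxrank_tr rankC; lia.
case/rowV0Pn => x; rewrite sub_kermx mulmxA => /eqP xC xnz.
have hnz : x *m S != 0.
  by apply: contraNneq xnz => xS0; rewrite -[x]mulmx1 -(sel_mx_mulT F T) mulmxA xS0 mul0mx.
exists (x *m S) => //; apply/eqP; rewrite eqEcard supp_mul_sel_mx /=.
by move: (dual_wt_gt xC hnz); rewrite -cT wtE.
Qed.

Lemma parity_check_row_wt r (H : 'M[F]_(r, n)) :
  parity_check C H -> forall i, row i H != 0 -> (k < wt (row i H))%N.
Proof. by move/parity_check_mul0 => HC i; apply: dual_wt_gt; rewrite -row_mul HC row0. Qed.

Lemma parity_check_of_realizes r (H : 'M[F]_(r, n)) :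
  H *m C^T = 0 -> realizes_supports H k.+1 -> parity_check C H.
Proof.
move=> HC realH u; rewrite -sub_kermx.
have HK : (H <= kermx C^T)%MS by rewrite sub_kermx HC.
suff KH : (kermx C^T <= H)%MS by apply/idP/idP => /submx_trans; apply.
apply: submx_by_supp_descent HK _ => u' u'C u'nz.
have [T [_ Tu cT]] : exists T : {set 'I_n}, [/\ set0 \subset T, T \subset supp u' & #|T| = k.+1].
  apply: exists_set_card_between; rewrite ?sub0set // cards0 -wtE.
  by apply: dual_wt_gt u'nz; apply/eqP; rewrite -sub_kermx.
have [i si] := realH T cT.
exists (row i H); first exact: row_sub.
by rewrite -supp_eq0 si -cards_eq0 cT.
Qed.

Lemma exists_realizing_parity_check : exists r (H : 'M[F]_(r, n)),
  [/\ r = 'C(n, k.+1), parity_check C H & realizes_supports H k.+1].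
Proof.
pose Ks := [set T : {set 'I_n} | #|T| == k.+1].
have /fin_all_exists[f fP] (i : 'I_#|Ks|) :
    exists h : 'rV[F]_n, h *m C^T = 0 /\ supp h = enum_val i.
  have /eqP cT : #|enum_val i| == k.+1 by have := enum_valP i; rewrite inE.
  by have [h hC sh] := dual_codeword_with_supp cT; exists h.
have realH : realizes_supports (\matrix_i f i) k.+1.
  move=> T cT; have TK : T \in Ks by rewrite inE cT.
  by exists (enum_rank_in TK T); rewrite rowK (fP _).2 enum_rankK_in.
exists #|Ks|, (\matrix_i f i); split=> //; first by rewrite card_draws card_ord.
apply: parity_check_of_realizes realH.
by apply/row_matrixP => i; rewrite row_mul rowK (fP i).1 row0.
Qed.

End MDSDual.

Theorem theorem16 (F : finFieldType) (m n k d : nat) (C : 'M[F]_(m, n)) :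
  MDS_code C k d -> (2 <= d)%N ->
  (forall (r : nat) (H : 'M[F]_(r, n)),
      parity_check C H -> stopping_distance_is H d ->
      ('C(n, d - 2) <= (d - 1) * r)%N) /\
  (exists (r : nat) (H : 'M[F]_(r, n)),
      [/\ parity_check C H, stopping_distance_is H d & (r <= 'C(n, d - 2))%N]).
Proof.
move=> [rankC [[[v [vC _] wv] mind] hd]] d2.
have C_mds (u : 'rV[F]_n) : (u <= C)%MS -> (u != 0)%R -> (n - k < wt u)%N.
  by move=> uC unz; rewrite -addn1 -hd; exact: mind.
have kn : (k < n)%N by lia.
have dk : d.-1 = (n - k)%N by lia.
have d2k : (d - 2)%N = (n - k.+1)%N by lia.
rewrite d2k subn1 dk; split=> [r H pH [ok _] | ].
  rewrite dk in ok.
  exact: card_stopping_sets_bin (parity_check_row_wt rankC C_mds pH) kn ok.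
have [r [H [cr pH realH]]] := exists_realizing_parity_check rankC C_mds.
exists r, H; split=> //.
  split; first by rewrite dk; exact: cols_ok_realizes.
  have Hv : (H *m v^T = 0)%R.
    by case/submxP: vC => x ->; rewrite trmx_mul mulmxA (parity_check_mul0 pH) mul0mx.
  by move=> ok; apply: (not_single_row_supp Hv); apply: ok; rewrite -wtE wv ?(ltnW d2).
by rewrite cr bin_sub.
Qed.
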